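(* Let $g,h\in G_n$ be such that $g$, $h$, $gh$ have modified types $\boldsymbol\lambda,\boldsymbol\mu,\boldsymbol\nu$ respectively, and suppose $\|\boldsymbol\nu\|=\|\boldsymbol\lambda\|+\|\boldsymbol\mu\|$. Set $k=\|\boldsymbol\nu\|+\ell(\boldsymbol\nu^e)$. Then there exist $z\in G_n$ and $\bar g,\bar h\in G_k$ such that $$zgz^{-1}=\begin{bmatrix}\bar g&0\\0&I_{n-k}\end{bmatrix},\quad zhz^{-1}=\begin{bmatrix}\bar h&0\\0&I_{n-k}\end{bmatrix},\quad zghz^{-1}=\begin{bmatrix}\bar g\bar h&0\\0&I_{n-k}\end{bmatrix}.$$
   Context: $q$ is a prime power, $G_n=GL_n(\mathbb F_q)$. $\Phi$ is the set of monic irreducible polynomials in $\mathbb F_q[t]$ other than $t$, $d(f)$ its degree; $\mathcal{P}(\Phi)$ is the set of finitely supported maps $\boldsymbol\lambda$ from $\Phi$ to partitions, $\|\boldsymbol\lambda\|=\sum_f d(f)|\boldsymbol\lambda(f)|$, $\boldsymbol\lambda^e=\boldsymbol\lambda(t-1)$, $\ell$ = number of nonzero parts. The type of $g\in G_n$ is the $\boldsymbol\lambda$ with $\mathbb F_q^n\cong\bigoplus_{f,i}\mathbb F_q[t]/(f^{\boldsymbol\lambda_i(f)})$ as $\mathbb F_q[t]$-modules ($t$ acting by $g$). The modified type of $g$ is $\mathring{\boldsymbol\lambda}$ with $\mathring{\boldsymbol\lambda}(f)=\boldsymbol\lambda(f)$ for $f\ne t-1$ and $\mathring{\boldsymbol\lambda}(t-1)=(\boldsymbol\lambda^e_1-1,\dots,\boldsymbol\lambda^e_r-1)$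 (zero parts discarded), $r=\ell(\boldsymbol\lambda^e)$. *)

From HB Require Import structures.
From mathcomp Require Import all_boot all_order all_algebra.
Set Implicit Arguments. Unset Strict Implicit. Unset Printing Implicit Defensive.
Import Order.TTheory GRing.Theory Num.Theory.
Local Open Scope ring_scope.

(* A finitely supported map Phi -> partitions, represented by its (finite)
   graph: a list of pairs (f, partition) with distinct keys f. *)
Definition ptype (F : finFieldType) := seq ({poly F} * seq nat).

Definition pt_at (F : finFieldType) (lam : ptype F) (f : {poly F}) : seq nat :=
  \big[cat/[::]]_(x <- lam | x.1 == f) x.2.

Definition wf_ptype (F : finFieldType) (lam : ptype F) : Prop :=
  uniq (map fst lam) /\
  forall x, x \in lam ->
    [/\ x.1 \is monic, irreducible_poly x.1, x.1 != 'X,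
        sorted geq x.2 & all (fun i => 0 < i)%N x.2].

Definition elem_divs (F : finFieldType) (lam : ptype F) : seq {poly F} :=
  flatten [seq [seq x.1 ^+ m | m <- x.2] | x <- lam].

(* lam is the type of g : F_q^n = (+)_{f,i} F_q[t]/(f^{lam_i(f)}) with t acting
   by g; equivalently g is similar to the block diagonal matrix of the
   companion matrices of the f^{lam_i(f)} (the matrix of t on F_q[t]/(f^m)). *)
Definition is_type (F : finFieldType) (n : nat) (g : 'M[F]_n) (lam : ptype F)
  : Prop :=
  wf_ptype lam /\
  let es := elem_divs lam in
  exists (e : (\sum_(i < size es) (size (nth 0%R es i)).-1)%N = n),
  exists P : 'M[F]_n, P \in unitmx /\
    g = invmx P *m castmx (e, e)
          (\mxdiag_(i < size es) companionmx (nth 0%R es i : seq F)) *m P.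

Definition modify (F : finFieldType) (lam : ptype F) : ptype F :=
  [seq (x.1, if x.1 == 'X - 1 then [seq i.-1 | i <- x.2 & (1 < i)%N] else x.2)
  | x <- lam].

Definition pnorm (F : finFieldType) (lam : ptype F) : nat :=
  (\sum_(x <- lam) (size x.1).-1 * sumn x.2)%N.

Definition ell_e (F : finFieldType) (lam : ptype F) : nat :=
  count (fun i => 0 < i)%N (pt_at lam ('X - 1)).

(* block matrix [[A, 0], [0, I_{n-k}]] of size n (meaningful for k <= n) *)
Definition embed_mx (F : finFieldType) (k n : nat) (A : 'M[F]_k) : 'M[F]_n :=
  \matrix_(i < n, j < n)
    match (insub (i : nat) : option 'I_k), (insub (j : nat) : option 'I_k) with
    | Some i', Some j' => A i' j'
    | _, _ => ((i : nat) == j)%:R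
    end.

From HB Require Import structures.
From mathcomp Require Import all_boot all_order all_algebra.
From mathcomp Require Import zify.
Set Implicit Arguments. Unset Strict Implicit. Unset Printing Implicit Defensive.
Import Order.TTheory GRing.Theory Num.Theory.
Local Open Scope ring_scope.

(* Let N = gh - 1 (matrices act on row vectors).  For g of type lam, rank (g - 1) is the
   norm of the modified type and rank (g - 1)^2 is smaller by the number of unipotent
   Jordan blocks of size at least 2; this is read off block by block from the companion
   matrices: a block of f^m with f <> t - 1 makes g - 1 invertible on it, and a block of
   (t - 1)^m is a cyclic nilpotent of rank m - 1.
   Since N = (g - 1) + g (h - 1), the additivity of ranks forces im N to be the direct
   sum of im (g - 1) and im (h - 1); hence every vector killed by N is killed by g - 1
   and h - 1, so ker N is fixed by g and h, while every space containing im N is stable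
   under them.  Splitting ker N as (ker N :&: im N) plus a complement U, and extending
   im N to a complement V of U, gives dim V = rank N + dim (ker N :&: im N)
   = 2 rank N - rank N^2 = k, and a basis adapted to V + U is the required z. *)

Lemma strictly_decreasing_countdown (r : nat -> nat) d :
  (forall j, (j < d)%N -> (r j.+1 < r j)%N) -> (r 0 <= d)%N -> r d = 0%N ->
  forall j, (j <= d)%N -> r j = (d - j)%N.
Proof.
move=> decr r0 rd.
have up j : (j <= d)%N -> (r j + j <= r 0)%N.
  elim: j => [|j IH] lt_jd; first by rewrite addn0.
  by have := decr j lt_jd; have := IH (ltnW lt_jd); lia.
have down t : (t <= d)%N -> (t <= r (d - t))%N.
  elim: t => [|t IH] lt_td //.
  have := decr (d - t.+1)%N; have -> : (d - t.+1).+1 = (d - t)%N by lia.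
  by have := IH (ltnW lt_td); lia.
move=> j le_jd; have := up j le_jd; have := down (d - j)%N; rewrite subKn //; lia.
Qed.

Section NilpotentRank.

Variables (F : fieldType) (n : nat) (N : 'M[F]_n).

Lemma mxrank_exprS_le j : (\rank (N ^+ j.+1) <= \rank (N ^+ j))%N.
Proof. by rewrite exprS -mulmxE mxrankM_maxr. Qed.

Lemma mxrank_expr_stable j :
  \rank (N ^+ j.+1) = \rank (N ^+ j) -> forall t, \rank (N ^+ (j + t)) = \rank (N ^+ j).
Proof.
move=> eq_rank.
have sub : (N ^+ j.+1 <= N ^+ j)%MS by rewrite exprS -mulmxE submxMl.
have eq_sp : (N ^+ j.+1 :=: N ^+ j)%MS.
  apply/eqmxP; rewrite sub /=.
  by have [_ <-] := mxrank_leqif_sup sub; rewrite eq_rank.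
suff eq_sp_t t : (N ^+ (j + t) :=: N ^+ j)%MS by move=> t; rewrite (eq_sp_t t).
elim: t => [|t IH]; first by rewrite addn0.
rewrite addnS exprSr -mulmxE; apply: eqmx_trans (eqmxMr N IH) _.
by rewrite mulmxE -exprSr.
Qed.

End NilpotentRank.

Lemma mxrank_expr_nilpotent (F : fieldType) n (N : 'M[F]_n) :
  N ^+ n = 0 -> N ^+ n.-1 != 0 -> forall j, \rank (N ^+ j) = (n - j)%N.
Proof.
move=> Nn0 Nn1 j; have [le_jn | lt_nj] := leqP j n; last first.
  by rewrite -(subnK (ltnW lt_nj)) exprD Nn0 mulr0 mxrank0; lia.
case: n N Nn0 Nn1 j le_jn => [|d] M Md Md1 j le_jn.
  by apply/eqP; rewrite -leqn0 rank_leq_row.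
have decr i : (i < d.+1)%N -> (\rank (M ^+ i.+1) < \rank (M ^+ i))%N.
  move=> lt_id; rewrite ltn_neqAle mxrank_exprS_le andbT; apply/eqP => eq_rank.
  have stable := mxrank_expr_stable eq_rank.
  have := stable (d - i)%N; have := stable (d.+1 - i)%N.
  rewrite !subnKC // 1?ltnW // Md mxrank0 => <-.
  by move/eqP; rewrite mxrank_eq0 (negPf Md1).
apply: strictly_decreasing_countdown decr _ _ j le_jn.
  by rewrite expr0 rank_leq_row.
by rewrite Md mxrank0.
Qed.

Section CompanionForm.

Variables (R : comNzRingType) (d : nat) (C : 'M[R]_d.+1).
Hypothesis C_shift : forall i j : 'I_d.+1, (i.+1 < d.+1)%N -> C i j = (i.+1 == j)%:R.

Lemma delta_mx0_exp_shift i (lt_i : (i < d.+1)%N) :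
  delta_mx 0 0 *m C ^+ i = delta_mx 0 (Ordinal lt_i) :> 'rV__.
Proof.
elim: i lt_i => [|i IH] lt_i.
  by rewrite expr0 mulmx1; congr delta_mx; apply: val_inj.
rewrite exprSr -mulmxE mulmxA (IH (ltnW lt_i)) -rowE.
by apply/rowP => j; rewrite !mxE C_shift //= eq_sym.
Qed.

Lemma row0_horner_shift (q : {poly R}) : (size q <= d.+1)%N ->
  delta_mx 0 0 *m horner_mx C q = \row_j q`_j :> 'rV__.
Proof.
move=> le_q; rewrite -[in LHS](coefK q) poly_def rmorph_sum mulmx_sumr.
apply/rowP => j; rewrite summxE mxE -[in RHS](coefK q) poly_def coef_sum.
apply: eq_bigr => i _; rewrite /= horner_mxZ rmorphXn /= horner_mx_X -scalemxAr.
rewrite (delta_mx0_exp_shift (leq_trans (ltn_ord i) le_q)).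
by rewrite !mxE coefZ coefXn eqxx.
Qed.

End CompanionForm.

Lemma mxrank_exp_subr_shift (F : fieldType) d (C : 'M[F]_d.+1) a :
  (forall i j : 'I_d.+1, (i.+1 < d.+1)%N -> C i j = (i.+1 == j)%:R) ->
  char_poly C = ('X - a%:P) ^+ d.+1 ->
  forall j, \rank ((C - a%:M) ^+ j) = (d.+1 - j)%N.
Proof.
move=> C_shift charC; set N := C - a%:M.
have hornerN k : horner_mx C (('X - a%:P) ^+ k) = N ^+ k.
  by rewrite rmorphXn rmorphB /= horner_mx_X horner_mx_C.
apply: mxrank_expr_nilpotent; first by rewrite -hornerN -charC Cayley_Hamilton.
have lead1 : (('X - a%:P) ^+ d)`_d = 1.
  by have := monicP (monic_exp d (monicXsubC a)); rewrite lead_coefE size_exp_XsubC.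
rewrite /= -hornerN; apply/eqP => /(congr1 (mulmx (delta_mx 0 0 : 'rV_d.+1))).
rewrite row0_horner_shift // ?size_exp_XsubC // mulmx0 => /rowP/(_ ord_max).
by rewrite !mxE /= lead1 => /eqP; rewrite oner_eq0.
Qed.

Section CompanionBlocks.

Variable F : fieldType.

Lemma companion_subr_unit (p : {poly F}) a :
  p \is monic -> ~~ root p a -> companionmx p - a%:M \in unitmx.
Proof.
move=> mon_p p_a; rewrite -row_free_unit -kermx_eq0.
by rewrite -[p in root p](companionmxK mon_p) -eigenvalue_root_char in p_a; apply/negbNE.
Qed.

Lemma mxrank_companion_exp_XsubC (a : F) m j :
  \rank ((companionmx (('X - a%:P) ^+ m) - a%:M) ^+ j) = (m - j)%N.
Proof.
set p := ('X - a%:P) ^+ m.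
have charC : char_poly (companionmx p) = p by rewrite companionmxK ?monic_exp ?monicXsubC.
have C_shift (i k : 'I_(size p).-1) : (i.+1 < (size p).-1)%N ->
    companionmx p i k = (i.+1 == k)%:R.
  by move=> lt_i; rewrite mxE ltn_eqF // -ltnS (leq_trans lt_i) ?leqSpred.
have size_p : (size p).-1 = m by rewrite size_exp_XsubC.
move: (companionmx p) C_shift charC; rewrite size_p /p => {p size_p}.
case: m => [|d] C C_shift charC; first by apply/eqP; rewrite -leqn0 rank_leq_row.
exact: mxrank_exp_subr_shift.
Qed.

Lemma monic_irreducible_root_eq (f : {poly F}) a :
  f \is monic -> irreducible_poly f -> root f a -> f = 'X - a%:P.
Proof.
move=> mon_f [_ irr_f]; rewrite root_factor_theorem => dvd_f.
have := irr_f _ _ dvd_f; rewrite size_XsubC => /(_ isT).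
by rewrite eqp_monic ?monicXsubC // => /eqP.
Qed.

Lemma mxrank_companion_exp_irreducible (f : {poly F}) m j :
  f \is monic -> irreducible_poly f ->
  \rank ((companionmx (f ^+ m) - 1%:M) ^+ j) =
    if f == 'X - 1 then (m - j)%N else ((size f).-1 * m)%N.
Proof.
move=> mon_f irr_f; case: eqP => [-> | f_neq].
  by rewrite -polyC1 mxrank_companion_exp_XsubC.
have unitN : companionmx (f ^+ m) - 1%:M \in unitmx.
  apply: companion_subr_unit; first exact: monic_exp.
  rewrite rootE horner_exp expf_neq0 //; apply/negP => f1.
  by apply: f_neq; rewrite (monic_irreducible_root_eq mon_f irr_f f1) polyC1.
have unitNj : (companionmx (f ^+ m) - 1%:M) ^+ j \in unitmx.
  by elim: j => [|j IH]; [exact: unitmx1 | rewrite exprS -mulmxE unitmx_mul unitN].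
by rewrite mxrank_unit // size_exp.
Qed.

End CompanionBlocks.

Lemma mul_mxdiag (R : pzRingType) p (p_ : 'I_p -> nat) (A B : forall i, 'M[R]_(p_ i)) :
  \mxdiag_i A i *m \mxdiag_i B i = \mxdiag_i (A i *m B i).
Proof.
rewrite [X in _ *m X]/mxdiag mul_mxdiag_mxblock /mxdiag.
apply/eq_mxblockP => i k; case: (eqVneq i k) => [<- | _]; last by rewrite mulmx0.
by rewrite !conform_mx_id.
Qed.

Lemma mxdiag_exp (R : pzRingType) p (p_ : 'I_p -> nat) (A : forall i, 'M[R]_(p_ i)) j :
  (\mxdiag_i A i) ^+ j = \mxdiag_i (A i ^+ j).
Proof.
elim: j => [|j IH]; first by rewrite expr0 -[1]/(1%:M) -mxdiagZ.
by rewrite exprS IH -mulmxE mul_mxdiag; apply: eq_mxdiag => i; rewrite exprS mulmxE.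
Qed.

Section Similarity.

Variables (F : fieldType) (n : nat) (P : 'M[F]_n).
Hypothesis P_unit : P \in unitmx.

Lemma mxrank_conj (A : 'M[F]_n) : \rank (invmx P *m A *m P) = \rank A.
Proof.
rewrite mxrankMfree ?row_free_unit //.
by rewrite (eqmxMfull A _) // row_full_unit unitmx_inv.
Qed.

Lemma conj_exp (A : 'M[F]_n) j : (invmx P *m A *m P) ^+ j = invmx P *m A ^+ j *m P.
Proof.
elim: j => [|j IH]; first by rewrite !expr0 mulmx1 mulVmx.
by rewrite !exprS IH -!mulmxE !mulmxA mulmxK.
Qed.

Lemma conj_subr (A : 'M[F]_n) a : invmx P *m A *m P - a%:M = invmx P *m (A - a%:M) *m P.
Proof. by rewrite mulmxBr mulmxBl scalar_mxC mulmxKV. Qed.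

End Similarity.

Section TypeRanks.

Variable F : finFieldType.

Definition type_rank (lam : ptype F) (j : nat) : nat :=
  (\sum_(x <- lam) \sum_(m <- x.2) if (x.1 == 'X - 1)%R then m - j else (size x.1).-1 * m)%N.

Lemma sum_elem_divs (lam : ptype F) (G : {poly F} -> nat) :
  (\sum_(i < size (elem_divs lam)) G (nth 0%R (elem_divs lam) i))%N =
  (\sum_(x <- lam) \sum_(m <- x.2) G (x.1 ^+ m))%N.
Proof.
rewrite -(big_mkord xpredT (fun i => G (elem_divs lam)`_i)) -(big_nth 0 xpredT G).
by rewrite /elem_divs big_flatten /= big_map; apply: eq_bigr => x _; rewrite big_map.
Qed.

Lemma pnorm_modify (lam : ptype F) : pnorm (modify lam) = type_rank lam 1.
Proof.
rewrite /pnorm /modify big_map; apply: eq_bigr => x _ /=.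
case: eqP => [-> | _]; last by rewrite sumnE big_distrr.
rewrite -polyC1 size_XsubC mul1n.
elim: x.2 => [|m s IH]; first by rewrite big_nil.
by rewrite big_cons /=; case: ltnP => /= [lt1m | lem1]; rewrite IH //; lia.
Qed.

Lemma ell_e_modify (lam : ptype F) : (type_rank lam 2 + ell_e (modify lam))%N = type_rank lam 1.
Proof.
rewrite /ell_e /pt_at (big_morph _ (count_cat _) (erefl : count _ [::] = 0%N)) /modify big_map.
rewrite /type_rank [X in (_ + X)%N]big_mkcond -big_split /=.
apply: eq_bigr => x _; case: eqP => [_ | _]; last by rewrite addn0.
elim: x.2 => [|m s IH]; first by rewrite !big_nil.
by rewrite !big_cons /=; case: ltnP => /= [lt1m | lem1]; lia.
Qed.

Lemma mxrank_type_exp_sub1 n (g : 'M[F]_n) lam j :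
  is_type g lam -> \rank ((g - 1%:M) ^+ j) = type_rank lam j.
Proof.
case=> [[_ wf_lam] [e [P [P_unit ->]]]].
rewrite conj_subr // conj_exp // mxrank_conj //.
clear g P P_unit; case: n / e; rewrite castmx_id.
set C := fun i => companionmx _.
have -> : \mxdiag_i C i - 1%:M = \mxdiag_i (C i - 1%:M) by rewrite mxdiagB mxdiagZ.
rewrite mxdiag_exp rank_mxdiag.
rewrite (sum_elem_divs lam (fun p => \rank ((companionmx p - 1%:M) ^+ j))).
apply: eq_big_seq => x /wf_lam [mon_f irr_f _ _ _]; apply: eq_bigr => m _.
exact: mxrank_companion_exp_irreducible.
Qed.

Lemma mxrank_type_sub1 n (g : 'M[F]_n) lam :
  is_type g lam -> \rank (g - 1%:M) = pnorm (modify lam).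
Proof.
by move=> type_g; rewrite -[g - _]expr1 (mxrank_type_exp_sub1 _ type_g) pnorm_modify.
Qed.

Lemma mxrank_type_sub1_sqr n (g : 'M[F]_n) lam :
  is_type g lam ->
  (\rank ((g - 1%:M) *m (g - 1%:M)) + ell_e (modify lam))%N = \rank (g - 1%:M).
Proof.
move=> type_g; rewrite mulmxE -expr2 -[in RHS](expr1 (g - _)).
rewrite !(mxrank_type_exp_sub1 _ type_g).
exact: ell_e_modify.
Qed.

End TypeRanks.

Section FixedKernel.

Variables (F : fieldType) (n : nat).
Implicit Types (g h N : 'M[F]_n).

Lemma stablemx_sub1 m (V : 'M[F]_(m, n)) g : (g - 1%:M <= V)%MS -> stablemx V g.
Proof.
move=> sub_gV; rewrite -[g](subrK 1%:M) mulmxDr mulmx1 addmx_sub //.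
exact: submx_trans (submxMl _ _) sub_gV.
Qed.

Lemma mxrank_diffmx m1 m2 (A : 'M[F]_(m1, n)) (B : 'M[F]_(m2, n)) :
  (\rank (A :\: B) + \rank (A :&: B))%N = \rank A.
Proof.
rewrite -mxrank_disjoint_sum ?addsmx_diff_cap_eq //; apply/eqP.
by rewrite -submx0 -(capmx_diff A B) capmxS ?capmxSr.
Qed.

Lemma rank_additive_fixed_kernel g h :
  \rank (g *m h - 1%:M) = (\rank (g - 1%:M)%R + \rank (h - 1%:M)%R)%N ->
  [/\ (g - 1%:M <= g *m h - 1%:M)%MS, (h - 1%:M <= g *m h - 1%:M)%MS,
      kermx (g *m h - 1%:M) *m g = kermx (g *m h - 1%:M) &
      kermx (g *m h - 1%:M) *m h = kermx (g *m h - 1%:M)].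
Proof.
set A := g - 1%:M; set B := h - 1%:M; set N := g *m h - 1%:M => rankN.
have N_def : N = A + g *m B by rewrite /N /A /B mulmxBr mulmx1 [RHS]addrC addrA subrK.
have sub_N_AB : (N <= A + B)%MS by rewrite N_def addmx_sub_adds ?submxMl.
have [le_AB eq_AB] := mxrank_adds_leqif A B.
have [le_N eq_N] := mxrank_leqif_sup sub_N_AB.
have capAB : (A :&: B)%MS = 0 by apply/eqP; rewrite -submx0 -eq_AB; lia.
have sub_AB_N : (A + B <= N)%MS by rewrite -eq_N; lia.
have sub_A : (A <= N)%MS := submx_trans (addsmxSl A B) sub_AB_N.
have sub_B : (B <= N)%MS := submx_trans (addsmxSr A B) sub_AB_N.
set K := kermx N; have KN : K *m N = 0 := mulmx_ker N.
have KA : K *m A = 0.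
  apply/eqP; rewrite -submx0 -capAB sub_capmx submxMl.
  have -> : K *m A = - (K *m g *m B).
    by apply/eqP; rewrite -subr_eq0 opprK -mulmxA -mulmxDr -N_def KN.
  by rewrite eqmx_opp submxMl.
have Kg : K *m g = K by rewrite -[g](subrK 1%:M) mulmxDr KA mulmx1 add0r.
have KB : K *m B = 0 by move: KN; rewrite N_def mulmxDr KA add0r mulmxA Kg.
have Kh : K *m h = K by rewrite -[h](subrK 1%:M) mulmxDr KB mulmx1 add0r.
by split.
Qed.

Lemma kermx_complement_decomposition N :
  exists V U : 'M[F]_n,
    [/\ (N <= V)%MS, (U <= kermx N)%MS, row_full (V + U),
        (\rank V + \rank U)%N = n & (\rank V + \rank (N *m N))%N = (\rank N + \rank N)%N].
Proof.
set K := kermx N; set U := (K :\: N)%MS; set V := (N + (N + U)^C)%MS.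
exists V, U; have sub_NV : (N <= V)%MS := addsmxSl _ _.
have capNU : (N :&: U)%MS = 0 by rewrite capmxC capmx_diff.
have sub_full : ((N + U) + (N + U)^C <= V + U)%MS.
  rewrite !addsmx_sub addsmxSr (submx_trans sub_NV) ?addsmxSl //=.
  exact: submx_trans (addsmxSr N _) (addsmxSl V U).
have full : row_full (V + U).
  by rewrite -sub1mx (submx_trans _ sub_full) // sub1mx addsmx_compl_full.
have rank_U : (\rank U + \rank (K :&: N))%N = \rank K := mxrank_diffmx K N.
have rank_K : \rank K = (n - \rank N)%N := mxrank_ker N.
have rank_N2 : (\rank (N *m N) + \rank (K :&: N))%N = \rank N.
  by rewrite capmxC mxrank_mul_ker.
have rank_NU : \rank (N + U) = (\rank N + \rank U)%N := mxrank_disjoint_sum capNU.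
have rank_C : \rank (N + U)^C%MS = (n - \rank (N + U))%N := mxrank_compl _.
have le_V : (\rank V <= \rank N + \rank (N + U)^C%MS)%N := mxrank_adds_leqif _ _.
have le_VU : (n <= \rank V + \rank U)%N.
  by have := mxrank_adds_leqif V U; rewrite (eqP full) => -[].
have := rank_leq_row N; have := rank_leq_col (N + U)%MS.
by split => //; [exact: diffmxSl | lia | lia].
Qed.

End FixedKernel.

Lemma conj_col_mx (F : fieldType) k m (V : 'M[F]_(k, k + m)) (U : 'M[F]_(m, k + m))
    (g : 'M[F]_(k + m)) :
  col_mx V U \in unitmx -> stablemx V g -> U *m g = U ->
  col_mx V U *m g *m invmx (col_mx V U) = block_mx (conjmx V g) 0 0 1%:M.
Proof.
move=> unitVU stVg Ug; apply: (canLR (mulmxK unitVU)).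
by rewrite mul_col_mx mul_block_col !mul0mx mul1mx addr0 add0r /conjmx mulmxKpV // Ug.
Qed.

Section BlockForm.

Variable F : finFieldType.

Lemma embed_mx_block k m (A : 'M[F]_k) : embed_mx (k + m) A = block_mx A 0 0 1%:M.
Proof.
apply/matrixP => i j; rewrite mxE -[i]splitK -[j]splitK.
case: (split i) => i'; case: (split j) => j'.
- by rewrite block_mxEul /= !valK.
- rewrite block_mxEur /= valK insubN ?mxE //=; last by rewrite -ltnNge leq_addr.
  by rewrite ltn_eqF // (leq_trans (ltn_ord i')) // leq_addr.
- rewrite block_mxEdl /= insubN ?mxE //=; last by rewrite -ltnNge leq_addr.
  by rewrite gtn_eqF // (leq_trans (ltn_ord j')) // leq_addr.
- rewrite block_mxEdr /= insubN ?mxE //=; last by rewrite -ltnNge leq_addr.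
  by rewrite eqn_add2l.
Qed.

Lemma exists_row_basis r n (V : 'M[F]_(r, n)) k :
  \rank V = k -> exists B : 'M[F]_(k, n), (B :=: V)%MS.
Proof. by move=> <-; exists (row_base V); exact: eq_row_base. Qed.

Lemma simultaneous_block_conj n k m (g h V U : 'M[F]_n) :
  n = (k + m)%N -> \rank V = k -> \rank U = m -> row_full (V + U) ->
  stablemx V g -> stablemx V h -> U *m g = U -> U *m h = U ->
  g \in unitmx -> h \in unitmx ->
  exists (z : 'M[F]_n) (gb hb : 'M[F]_k),
    [/\ z \in unitmx, gb \in unitmx & hb \in unitmx] /\
    [/\ z *m g *m invmx z = embed_mx n gb,
        z *m h *m invmx z = embed_mx n hb &
        z *m (g *m h) *m invmx z = embed_mx n (gb *m hb)].
Proof.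
move=> def_n; subst n => rankV rankU fullVU stVg stVh Ug Uh unit_g unit_h.
have [Vb eqVb] := exists_row_basis rankV; have [Ub eqUb] := exists_row_basis rankU.
have [D def_Ub] : exists D, Ub = D *m U by apply/submxP; rewrite eqUb.
have Ubg : Ub *m g = Ub by rewrite def_Ub -mulmxA Ug.
have Ubh : Ub *m h = Ub by rewrite def_Ub -mulmxA Uh.
set z := col_mx Vb Ub.
have unit_z : z \in unitmx by rewrite -row_full_unit /row_full -addsmxE (adds_eqmx eqVb eqUb).
have block_g := conj_col_mx unit_z (etrans (eqmx_stable _ eqVb) stVg) Ubg.
have block_h := conj_col_mx unit_z (etrans (eqmx_stable _ eqVb) stVh) Ubh.
have unit_block A : block_mx A 0 0 (1%:M : 'M[F]_m) \in unitmx -> A \in unitmx.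
  by rewrite !unitmxE det_ublock det1 mulr1.
exists z, (conjmx Vb g), (conjmx Vb h); rewrite !embed_mx_block; split.
  split => //; apply: unit_block;
    by rewrite -?block_g -?block_h !unitmx_mul unit_z unitmx_inv unit_z ?unit_g ?unit_h.
have -> : z *m (g *m h) *m invmx z = (z *m g *m invmx z) *m (z *m h *m invmx z).
  by rewrite !mulmxA mulmxKV.
by rewrite block_g block_h mulmx_block !(mulmx0, mul0mx, addr0, add0r, mulmx1).
Qed.

End BlockForm.

Theorem proposition3p3 (F : finFieldType) (n : nat) (g h : 'M[F]_n)
    (lam mu nu : ptype F) :
  g \in unitmx -> h \in unitmx ->
  is_type g lam -> is_type h mu -> is_type (g *m h) nu ->
  pnorm (modify nu) = (pnorm (modify lam) + pnorm (modify mu))%N ->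
  let k := (pnorm (modify nu) + ell_e (modify nu))%N in
  (k <= n)%N /\
  exists (z : 'M[F]_n) (gb hb : 'M[F]_k),
    [/\ z \in unitmx, gb \in unitmx & hb \in unitmx] /\
    [/\ z *m g *m invmx z = embed_mx n gb,
        z *m h *m invmx z = embed_mx n hb &
        z *m (g *m h) *m invmx z = embed_mx n (gb *m hb)].
Proof.
move=> unit_g unit_h type_g type_h type_gh norm_add k.
have rankN := mxrank_type_sub1 type_gh; have rankN2 := mxrank_type_sub1_sqr type_gh.
set N := g *m h - 1%:M in rankN rankN2 *.
have additive : \rank N = (\rank (g - 1%:M)%R + \rank (h - 1%:M)%R)%N.
  by rewrite rankN norm_add (mxrank_type_sub1 type_g) (mxrank_type_sub1 type_h).
have [sub_gN sub_hN Kg Kh] := rank_additive_fixed_kernel additive.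
have [V [U [sub_NV sub_UK full rank_VU rank_V]]] := kermx_complement_decomposition N.
(* The fold [-/] makes the two structure instances of [N *m N] syntactically equal for [lia]. *)
have rank_Vk : \rank V = k by move: rank_V; rewrite -/(\rank (N *m N)) /k -rankN; lia.
have le_kn : (k <= n)%N by rewrite -rank_Vk rank_leq_col.
have fixed_U x : kermx N *m x = kermx N -> U *m x = U.
  by move=> Kx; have [D ->] := submxP sub_UK; rewrite -mulmxA Kx.
split=> //; apply: (simultaneous_block_conj (esym (subnKC le_kn)) rank_Vk _ full) => //.
- by rewrite -rank_Vk; lia.
- exact: stablemx_sub1 (submx_trans sub_gN sub_NV).
- exact: stablemx_sub1 (submx_trans sub_hN sub_NV).
- exact: fixed_U.
- exact: fixed_U.
Qed.
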